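(* Let $C$ be a $2\times N$ real matrix with non-negative entries and let $1\le p\le2$. If $C_{ij}=0$ for some entry, then $(C^{[p-1]})_{ij}\le0$.
   Context: For a real or complex matrix $C$ and real $r$, the $r$-th polar power is $C^{[r]}:=(CC^* )^{(r-1)/2}C$ (here $C^*=C^T$). For $p<2$ the exponent $(p-2)/2$ is negative; if $CC^T$ is singular, powers of the positive semidefinite matrix $CC^T$ are taken on its support (i.e. via its spectral decomposition, using only the nonzero eigenvalues), equivalently $C^{[r]}=|C^*|^{r-1}U$ where $C=U|C|$ is the polar decomposition. *)

From HB Require Import structures.
From mathcomp Require Import all_boot all_order all_algebra.
From mathcomp Require Import classical_sets boolp reals exp.
Set Implicit Arguments. Unset Strict Implicit. Unset Printing Implicit Defensive.
Import Order.TTheory GRing.Theory Num.Theory.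
Local Open Scope ring_scope.

(* T is "S^s taken on the support of S" computed from an orthogonal
   diagonalization S = Q diag(d) Q^T: T = Q diag(d_i^s if d_i > 0, else 0) Q^T. *)
Definition is_spec_pow (R : realType) (n : nat) (S : 'M[R]_n) (s : R)
    (T : 'M[R]_n) : Prop :=
  exists (Q : 'M[R]_n) (d : 'rV[R]_n),
    Q^T *m Q = 1%:M /\
    S = Q *m diag_mx d *m Q^T /\
    T = Q *m diag_mx (\row_i (if 0 < d 0 i then powR (d 0 i) s else 0)) *m Q^T.

Definition mx_spec_pow (R : realType) (n : nat) (S : 'M[R]_n) (s : R) : 'M[R]_n :=
  xget 0 (is_spec_pow S s).

Definition polar_pow (R : realType) (m n : nat) (C : 'M[R]_(m, n)) (r : R)
    : 'M[R]_(m, n) :=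
  mx_spec_pow (C *m C^T) ((r - 1) / 2) *m C.

From HB Require Import structures.
From mathcomp Require Import all_boot all_order all_algebra.
From mathcomp Require Import classical_sets boolp reals exp.
From mathcomp Require Import ring lra.
Set Implicit Arguments. Unset Strict Implicit. Unset Printing Implicit Defensive.
Import Order.TTheory GRing.Theory Num.Theory.
Local Open Scope ring_scope.

(* Write C C^T = Q diag(d) Q^T with Q orthogonal; with s = (p - 2)/2 <= 0 we
   have C^[p-1] = Q diag(d^s) Q^T C, and Q^T C has a zero row wherever d
   vanishes.  If some eigenvalue vanishes, only the other one acts on C and
   C^[p-1] is a scalar multiple of C, hence zero at (i, j).  Otherwise, for
   2 x 2 orthogonal Q the off-diagonal entry of Q diag(f) Q^T is w (f_1 - f_2)
   for a weight w independent of f.  For f = d it is an entry of C C^T, hence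
   non-negative, so for f = d^s it is non-positive because x |-> x^s is
   antitone; and (C^[p-1])_ij = (Q diag(d^s) Q^T)_ii' C_i'j for the other
   row i'. *)

Section NonposPowR.
Variable R : realType.

Lemma le0_ger_powR (s : R) :
  s <= 0 -> {in Num.pos &, {homo @powR R ^~ s : x y /~ y <= x}}.
Proof.
move=> s_le0 x y x_gt0 y_gt0 le_xy.
have powR_inv z : z `^ s = (z `^ (- s))^-1 by rewrite -powRN opprK.
rewrite !powR_inv lef_pV2 ?posrE ?powR_gt0 //.
apply: ge0_ler_powR => //; first by rewrite oppr_ge0.
all: by rewrite nnegrE ltW.
Qed.

Lemma mul_powRB_le0 (s w x y : R) : s <= 0 -> 0 < x -> 0 < y ->
  0 <= w * (x - y) -> w * (x `^ s - y `^ s) <= 0.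
Proof.
move=> s_le0 x_gt0 y_gt0; have [w_lt0|w_gt0|->] := ltgtP w 0; last by rewrite !mul0r.
- rewrite nmulr_rge0 // subr_le0 => le_xy.
  by rewrite nmulr_rle0 // subr_ge0 (le0_ger_powR s_le0).
- rewrite pmulr_rge0 // subr_ge0 => le_yx.
  by rewrite pmulr_rle0 // subr_le0 (le0_ger_powR s_le0).
Qed.

End NonposPowR.

Section SpectralCalculus.
Variables (R : realType) (n m : nat).
Variables (Q : 'M[R]_n) (d : 'rV[R]_n) (C : 'M[R]_(n, m)).
Hypothesis QTQ : Q^T *m Q = 1%:M.
Hypothesis CCT : C *m C^T = Q *m diag_mx d *m Q^T.

Lemma gram_eigen_coords : (Q^T *m C) *m (Q^T *m C)^T = diag_mx d.
Proof.
by rewrite trmx_mul trmxK !mulmxA -(mulmxA _ C) CCT !mulmxA QTQ mul1mx -mulmxA QTQ mulmx1.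
Qed.

Lemma eigen_sum_sqr k : d 0 k = \sum_l (Q^T *m C) k l ^+ 2.
Proof.
have := congr1 (fun M : 'M[R]_n => M k k) gram_eigen_coords.
rewrite !mxE eqxx mulr1n => <-.
by apply: eq_bigr => l _; rewrite expr2; congr (_ * _); apply: mxE.
Qed.

Lemma eigen_coords_row_eq0 k : ~~ (0 < d 0 k) -> forall l, (Q^T *m C) k l = 0.
Proof.
have coord_sqr_ge0 l : 0 <= (Q^T *m C) k l ^+ 2 by rewrite sqr_ge0.
have d_ge0 : 0 <= d 0 k by rewrite eigen_sum_sqr sumr_ge0.
rewrite lt_def d_ge0 andbT negbK eigen_sum_sqr psumr_eq0 // => /allP sqr_eq0 l.
by apply/eqP; rewrite -sqrf_eq0; apply: sqr_eq0; rewrite mem_index_enum.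
Qed.

Lemma spec_mulmx_supp (f h : 'rV[R]_n) : (forall k, 0 < d 0 k -> f 0 k = h 0 k) ->
  Q *m diag_mx f *m Q^T *m C = Q *m diag_mx h *m Q^T *m C.
Proof.
move=> eq_fh; rewrite -!mulmxA; congr (Q *m _); apply/matrixP => k l.
move: (Q^T *m C) (@eigen_coords_row_eq0 k) => D D_row_eq0.
rewrite !mul_diag_mx !mxE; have [/eq_fh -> //|d_k] := boolP (0 < d 0 k).
by rewrite D_row_eq0 // !mulr0.
Qed.

Lemma spec_mulmx_const (f : 'rV[R]_n) (c : R) : (forall k, 0 < d 0 k -> f 0 k = c) ->
  Q *m diag_mx f *m Q^T *m C = c *: C.
Proof.
move=> f_c; rewrite (@spec_mulmx_supp f (const_mx c)) => [|k /f_c ->]; last by rewrite mxE.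
by rewrite diag_const_mx mul_mx_scalar -!scalemxAl (mulmx1C QTQ) mul1mx.
Qed.

End SpectralCalculus.

Lemma ord2P (k : 'I_2) : k = ord0 \/ k = ord_max.
Proof. by case: k => [[|[|//]] k_lt2]; [left | right]; apply: val_inj. Qed.

Lemma sum_ord2 (R : nmodType) (F : 'I_2 -> R) : \sum_l F l = F ord0 + F ord_max.
Proof. by rewrite !big_ord_recl big_ord0 addr0; congr (_ + F _); apply: val_inj. Qed.

Lemma sum_ord2_rev (R : nmodType) (i : 'I_2) (F : 'I_2 -> R) :
  \sum_l F l = F i + F (rev_ord i).
Proof.
rewrite sum_ord2; have [->|->] := ord2P i; last rewrite addrC.
all: by congr (_ + F _); apply: val_inj.
Qed.

Lemma orthogonal_conj_diag_offdiag2 (R : comPzRingType) (Q : 'M[R]_2) (f : 'rV[R]_2)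
    (i i' : 'I_2) :
  Q *m Q^T = 1%:M -> i != i' ->
  (Q *m diag_mx f *m Q^T) i i' = Q i ord0 * Q i' ord0 * (f 0 ord0 - f 0 ord_max).
Proof.
move=> QQT neq_ii'.
have rows_orth : Q i ord0 * Q i' ord0 = - (Q i ord_max * Q i' ord_max).
  apply/eqP; rewrite -addr_eq0; apply/eqP.
  move: (congr1 (fun M : 'M[R]_2 => M i i') QQT).
  by rewrite !mxE (negbTE neq_ii') mulr0n sum_ord2 !mxE.
rewrite mxE sum_ord2 !mul_mx_diag !mxE (mulrAC (Q i ord0)) (mulrAC (Q i ord_max)) rows_orth.
ring.
Qed.

Theorem mainTheorem11 (R : realType) (N : nat) (C : 'M[R]_(2, N)) (p : R) :
  (forall i j, 0 <= C i j) -> 1 <= p -> p <= 2 ->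
  forall (i : 'I_2) (j : 'I_N), C i j = 0 -> polar_pow C (p - 1) i j <= 0.
Proof.
move=> C_ge0 p_ge1 p_le2 i j Cij; rewrite /polar_pow /mx_spec_pow.
case: xgetP => [_ _ [Q [d [QTQ [CCT ->]]]] | _]; last by rewrite mul0mx mxE.
set g := \row_k _; have QQT := mulmx1C QTQ.
have [/andP[d0_gt0 d1_gt0] | degenerate] := boolP ((0 < d 0 ord0) && (0 < d 0 ord_max)).
- have neq_ii' : i != rev_ord i by have [->|->] := ord2P i.
  rewrite mxE (sum_ord2_rev i) Cij mulr0 add0r; apply: mulr_le0_ge0 (C_ge0 _ _).
  rewrite orthogonal_conj_diag_offdiag2 // !mxE d0_gt0 d1_gt0.
  apply: mul_powRB_le0 => //; first lra.
  rewrite -orthogonal_conj_diag_offdiag2 // -CCT mxE.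
  by apply: sumr_ge0 => l _; rewrite mxE mulr_ge0.
- rewrite (spec_mulmx_const QTQ CCT (c := g 0 ord0 + g 0 ord_max)) => [|k].
    by rewrite mxE Cij mulr0.
  have [->|->] := ord2P k => d_gt0;
    move: degenerate; rewrite d_gt0 ?andbT /= => /negbTE d'_le0.
  + by rewrite [g 0 ord_max]mxE d'_le0 addr0.
  + by rewrite [g 0 ord0]mxE d'_le0 add0r.
Qed.
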